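(* The problem $\textsc{Corresponding Order}$ belongs to $\mathsf{dMAM}[\log N]$. That is, there is a three-interaction distributed interactive protocol (Merlin, then Arthur, then Merlin, followed by one deterministic verification round) using certificates and messages of $\mathcal{O}(\log N)$ bits such that, on every connected network configuration $\langle G=(V,E),\mathrm{id},(x,\pi)\rangle$ with $|V|=n$: if (i) $\pi$ is a bijection from $V$ to $\{0,\dots,n-1\}$, (ii) $x$ is an injective function from $V$ to $\{0,\dots,N-1\}$ with $N\ge n$, and (iii) for all $u,v\in V$, $\pi(u)\ge\pi(v)\iff x(u)\ge x(v)$, then some prover makes all nodes accept with probability at least $2/3$; and if any of (i)–(iii) fails, then for every prover at least one node rejects with probability at least $2/3$.
   Context: Distributed setting: $G=(V,E)$ is a simple connected $n$-node graph; each node $v$ has a unique identifier $\mathrm{id}(v)\in\{1,\dots,\mathrm{poly}(n)\}$ and an input label; nodes know only a polynomial upper bound on $n$, not $n$ itself. In the input to $\textsc{Corresponding Order}$, each node $v$ receives the values $x(v)$ and $\pi(v)$. A $\mathsf{dMAM}[f(n)]$ protocol works as follows: an untrusted, computationally unbounded prover (Merlin) who knows the whole configuration gives each node $v$ a certificate $c_0(v)$; then a public random string $r$ (shared by all nodes and seen by Merlin) is drawn; then Merlin gives each node a second certificate $c_1(v)$ (depending on $r$); finally, in one deterministic round, each node sends one message to each neighbor (depending on its id, input, $r$ and its certificates) and then accepts or rejects based on all its information. All certificates and messages have $\mathcal{O}(f(n))$ bits (here $\mathcal{O}(\log N)$). Completeness: on yes-instances, some prover makes all nodes accept with probability $\ge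 2/3$. Soundness: on no-instances, for every prover, some node rejects with probability $\ge 2/3$. *)

From mathcomp Require Import all_boot.
Set Implicit Arguments. Unset Strict Implicit. Unset Printing Implicit Defensive.

Definition bits := seq bool.

(* Everything a node computes may depend on the global
   parameter N (known to all nodes), its own identifier, its input
   (x(v), pi(v)), the public random string r and its two certificates.
   - rand_len N : length of the public random string r (uniform in {0,1}^L);
   - send N id x pi r c0 c1 : the message the node sends to its neighbours;
   - decide N id x pi r c0 c1 ms : the accept (true) / reject decision, where
     ms is the list of messages received from the neighbours. *)
Record dMAM_protocol := DMAM {
  rand_len : nat -> nat;
  send : nat -> nat -> nat -> nat -> bits -> bits -> bits -> bits;
  decide : nat -> nat -> nat -> nat -> bits -> bits -> bits -> seq bits -> bool
}.

(* O(log N) bits: at most c * (floor(log2 N) + 1) bits. *)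
Definition size_bound (c N : nat) : nat := c * (trunc_log 2 N).+1.

Definition messages_bounded (P : dMAM_protocol) (c : nat) : Prop :=
  forall N i a b (r c0 c1 : bits),
    size r = rand_len P N -> size c0 <= size_bound c N -> size c1 <= size_bound c N ->
    size (send P N i a b r c0 c1) <= size_bound c N.

Definition network (V : finType) (e : rel V) (id : V -> nat) (k : nat) : Prop :=
  [/\ symmetric e, irreflexive e, 0 < #|V| & forall u v, connect e u v] /\
  (injective id /\ forall v, 1 <= id v <= #|V| ^ k).

Definition corresponding_order (V : finType) (N : nat) (x pi : V -> nat) : Prop :=
  [/\
      [/\ forall v, pi v < #|V|, injective pi & forall i, i < #|V| -> exists v, pi v = i],
      [/\ #|V| <= N, forall v, x v < N & injective x]
    &
      forall u v, pi v <= pi u <-> x v <= x u].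

Definition all_accept (P : dMAM_protocol) (N : nat) (V : finType) (e : rel V)
    (id x pi : V -> nat) (c0 : V -> bits) (r : bits) (c1 : V -> bits) : bool :=
  [forall v, decide P N (id v) (x v) (pi v) r (c0 v) (c1 v)
     [seq send P N (id u) (x u) (pi u) r (c0 u) (c1 u) | u <- enum V & e v u]].

(* A prover: first certificate c0, then (after seeing r) second certificate c1,
   both of at most size_bound c N bits. *)
Definition prover_bounded (P : dMAM_protocol) (c N : nat) (V : finType)
    (c0 : V -> bits) (c1 : (rand_len P N).-tuple bool -> V -> bits) : Prop :=
  (forall v, size (c0 v) <= size_bound c N) /\
  (forall r v, size (c1 r v) <= size_bound c N).

Definition n_accept (P : dMAM_protocol) (N : nat) (V : finType) (e : rel V)
    (id x pi : V -> nat) (c0 : V -> bits) (c1 : (rand_len P N).-tuple bool -> V -> bits) : nat :=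
  #|[set r : (rand_len P N).-tuple bool | all_accept P N e id x pi c0 (val r) (c1 r)]|.

Definition n_reject (P : dMAM_protocol) (N : nat) (V : finType) (e : rel V)
    (id x pi : V -> nat) (c0 : V -> bits) (c1 : (rand_len P N).-tuple bool -> V -> bits) : nat :=
  #|[set r : (rand_len P N).-tuple bool | ~~ all_accept P N e id x pi c0 (val r) (c1 r)]|.

Arguments prover_bounded P c N {V} c0 c1.
Arguments n_accept P N {V} e id x pi c0 c1.
Arguments n_reject P N {V} e id x pi c0 c1.
Arguments all_accept P N {V} e id x pi c0 r c1.
Arguments network {V} e id k.
Arguments corresponding_order {V} N x pi.

(* Merlin certifies a spanning tree (root id, parent ids and subtree sizes;
   all nodes agree on the root id and on n, which the root compares with its
   subtree size) and announces, for every node v, the value y(v) of x at the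
   successor of v in the order pi; unless v is last, it checks x(v) < y(v).
   Conditions (i)-(iii) then follow from the multiset equality
     {(pi v, x v) : pi v <> 0} = {(pi v + 1, y v) : pi v + 1 <> n},
   since all levels of pi then have the same size, hence size one, and x
   increases along successors.  The public random string is a random function
   H from keys to {0,...,3}; the second certificate carries subtree sums of H
   over both multisets and the root compares the totals.  If the multisets
   differ at some key, then for any fixed values of H elsewhere at most one of
   the four values of H at that key balances the totals, so a no-instance is
   accepted with probability at most 1/4. *)

From mathcomp Require Import all_boot zify.
Set Implicit Arguments. Unset Strict Implicit. Unset Printing Implicit Defensive.

Fixpoint bits_of_nat (w m : nat) : bits :=
  if w is w'.+1 then odd m :: bits_of_nat w' m./2 else [::].

Definition nat_of_bits (s : bits) : nat := foldr (fun (b : bool) n => b + n.*2) 0 s.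

Lemma size_bits_of_nat w m : size (bits_of_nat w m) = w.
Proof. by elim: w m => //= w IH m; rewrite IH. Qed.

Lemma bits_of_natK w m : m < 2 ^ w -> nat_of_bits (bits_of_nat w m) = m.
Proof.
elim: w m => [|w IH] m /=; first by case: m.
rewrite expnS => hm; rewrite IH; first exact: odd_double_half.
have := odd_double_half m; lia.
Qed.

Lemma nat_of_bits_lt s : nat_of_bits s < 2 ^ size s.
Proof. elim: s => //= b s IH; rewrite expnS; case: b; lia. Qed.

Definition encode (w : nat) (l : seq nat) : bits := flatten (map (bits_of_nat w) l).
Definition field (w : nat) (s : bits) (j : nat) : nat := nat_of_bits (take w (drop (j * w) s)).

Lemma size_encode w l : size (encode w l) = size l * w.
Proof.
by elim: l => //= a l IH; rewrite /encode /= size_cat size_bits_of_nat -/(encode w l) IH.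
Qed.

Lemma field_encode w l j :
  all (fun a => a < 2 ^ w) l -> j < size l -> field w (encode w l) j = nth 0 l j.
Proof.
elim: l j => //= a l IH [|j] /andP[ha hl] hj.
  by rewrite /field /encode /= mul0n drop0 take_size_cat ?size_bits_of_nat // bits_of_natK.
rewrite /field /encode /= mulSn drop_cat size_bits_of_nat ltnNge leq_addr /= addKn.
exact: IH.
Qed.

Lemma field_lt w s j : field w s j < 2 ^ w.
Proof.
apply: leq_trans (nat_of_bits_lt _) _; rewrite leq_exp2l // size_take.
by case: ifP => // /negbT; rewrite -leqNgt.
Qed.

Definition key_count (V : finType) (T : eqType) (f : V -> option T) (t : T) : nat :=
  #|[pred v | f v == Some t]|.

(* The random string read as a random function from keys to {0,..,3}:
   key [u] is hashed to the bits at positions [2u] and [2u + 1]. *)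
Definition hash (r : bits) (u : nat) : nat :=
  (nth false r u.*2).*2 + nth false r u.*2.+1.

Definition hash_key (r : bits) (o : option nat) : nat := if o is Some u then hash r u else 0.

Definition fingerprint (V : finType) (r : bits) (f : V -> option nat) : nat :=
  \sum_v hash_key r (f v).

Lemma hash_le3 r u : hash r u <= 3.
Proof. by rewrite /hash; case: (nth _ _ _); case: (nth _ _ _). Qed.

Lemma hash_key_le3 r o : hash_key r o <= 3.
Proof. by case: o => [u|] //=; exact: hash_le3. Qed.

Section Fingerprint.
Variables (L u0 : nat) (V : finType) (f g : V -> option nat).
Hypotheses (u0_lt : u0.*2.+1 < L) (count_neq : key_count f u0 != key_count g u0).

Definition agree_off (r r' : bits) := forall i, i./2 != u0 -> nth false r i = nth false r' i.

Lemma fingerprint_split (h : V -> option nat) r r' : agree_off r r' ->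
  exists R, fingerprint r h = key_count h u0 * hash r u0 + R /\
            fingerprint r' h = key_count h u0 * hash r' u0 + R.
Proof.
move=> hoff.
have split_u0 s : fingerprint s h =
    key_count h u0 * hash s u0 + \sum_(v | h v != Some u0) hash_key s (h v).
  rewrite /fingerprint (bigID (fun v => h v == Some u0)) /= -sum_nat_const.
  by congr (_ + _); apply: eq_bigr => v /eqP ->.
exists (\sum_(v | h v != Some u0) hash_key r (h v)); rewrite !split_u0; split => //.
congr (_ + _); apply: eq_bigr => v; case: (h v) => [u|] //= hu.
have hu0 : u != u0 by apply: contra hu => /eqP ->.
by rewrite /hash !hoff // ?doubleK //; move: hu0; lia.
Qed.

Lemma collision_hash_eq r r' : agree_off r r' ->
  fingerprint r f = fingerprint r g -> fingerprint r' f = fingerprint r' g ->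
  hash r u0 = hash r' u0.
Proof.
move=> hoff; have [Rf [-> ->]] := fingerprint_split f hoff.
have [Rg [-> ->]] := fingerprint_split g hoff.
move: count_neq; set cf := key_count f u0; set cg := key_count g u0 => hc e1 e2.
(* subtracting the two equations gives (cf - cg) (hash r u0 - hash r' u0) = 0 *)
case: (ltngtP cf cg) hc => // hcfg _; case: (ltngtP (hash r u0) (hash r' u0)) => // hh;
  have := ltn_mul hcfg hh; nia.
Qed.

Lemma hash_eq_nth r r' u : hash r u = hash r' u ->
  nth false r u.*2 = nth false r' u.*2 /\ nth false r u.*2.+1 = nth false r' u.*2.+1.
Proof.
by rewrite /hash; case: (nth false r u.*2) (nth false r' u.*2)
  (nth false r u.*2.+1) (nth false r' u.*2.+1) => [] [] [] [].
Qed.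

Lemma eq_agree_off (r r' : L.-tuple bool) : agree_off r r' ->
  nth false r u0.*2 = nth false r' u0.*2 -> nth false r u0.*2.+1 = nth false r' u0.*2.+1 ->
  r = r'.
Proof.
move=> hoff e0 e1; apply: val_inj; apply: (eq_from_nth (x0 := false)); first by rewrite !size_tuple.
move=> i _; have [/eqP hi|] := boolP (i./2 == u0); last exact: hoff.
by have [->|->] : i = u0.*2 \/ i = u0.*2.+1 by lia.
Qed.

Definition flip (b : bool * bool) (r : L.-tuple bool) : L.-tuple bool :=
  [tuple tnth r i (+) ((val i == u0.*2) && b.1) (+) ((val i == u0.*2.+1) && b.2) | i < L].

Lemma nth_flip b r i : i < L ->
  nth false (flip b r) i = nth false r i (+) ((i == u0.*2) && b.1) (+) ((i == u0.*2.+1) && b.2).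
Proof. by move=> hi; rewrite -(tnth_nth _ _ (Ordinal hi)) tnth_mktuple (tnth_nth false). Qed.

Lemma flip_agree_off b b' r r' : flip b r = flip b' r' -> agree_off r r'.
Proof.
move=> eqf i hi; case: (ltnP i L) => hiL; last by rewrite !nth_default ?size_tuple.
have := congr1 (fun t : L.-tuple bool => nth false t i) eqf; rewrite !nth_flip //.
have [-> ->] : (i == u0.*2) = false /\ (i == u0.*2.+1) = false.
  by split; apply/negbTE; move: hi; lia.
by rewrite !addbF.
Qed.

Definition collisions := [set r : L.-tuple bool | fingerprint r f == fingerprint r g].

(* Two collisions agreeing off the hash bits of [u0] are equal, as those bits
   are then determined by the others; so the four flips of the collisions are
   pairwise distinct tuples. *)
Lemma flip_inj : {in setX [set: bool * bool] collisions &, injective (fun p => flip p.1 p.2)}.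
Proof.
move=> [b r] [b' r'] /setXP[_ hr] /setXP[_ hr'] /= eqf; rewrite !inE in hr hr'.
have hoff := flip_agree_off eqf.
have [e0 e1] := hash_eq_nth (collision_hash_eq hoff (eqP hr) (eqP hr')).
have eqr := eq_agree_off hoff e0 e1; subst r'.
have bit i (hi : i < L) := congr1 (fun t : L.-tuple bool => nth false t i) eqf.
have lt0 : u0.*2 < L by lia.
have := bit _ u0_lt; have := bit _ lt0; rewrite !nth_flip //.
have [-> ->] : (u0.*2.+1 == u0.*2) = false /\ (u0.*2 == u0.*2.+1) = false by lia.
rewrite !eqxx /= !addbF; case: b b' {eqf bit} => [b1 b2] [b1' b2'] /=.
by case: (nth false r u0.*2) (nth false r u0.*2.+1) => [] []; case: b1 b2 b1' b2' => [] [] [] [].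
Qed.

Lemma card_collisions : 4 * #|collisions| <= 2 ^ L.
Proof.
have := card_in_imset flip_inj; rewrite cardsX cardsT card_prod card_bool => <-.
by apply: leq_trans (max_card _) _; rewrite card_tuple card_bool.
Qed.

End Fingerprint.

(* Summing the recurrence over all nodes counts every non-root once as a
   child of its parent; no acyclicity of [par] is needed. *)
Lemma sum_roots_recurrence (V : finType) (is_root : pred V) (par : V -> V) (S wt : V -> nat) :
  (forall v, S v = wt v + \sum_(u | ~~ is_root u && (par u == v)) S u) ->
  \sum_(u | is_root u) S u = \sum_v wt v.
Proof.
move=> hS.
have : \sum_v S v = \sum_v wt v + \sum_(u | ~~ is_root u) S u.
  under eq_bigr do rewrite hS.
  by rewrite big_split /= [X in _ = _ + X](partition_big par predT).
rewrite (bigID is_root) /=; lia.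
Qed.

Section BfsTree.
Variables (V : finType) (e : rel V) (rt : V).
Hypothesis rt_connected : forall v, connect e rt v.

Fixpoint ball k : {set V} :=
  if k is k'.+1 then ball k' :|: [set v | [exists u in ball k', e u v]] else [set rt].

Lemma ballS k u v : u \in ball k -> e u v -> v \in ball k.+1.
Proof.
by move=> hu huv; rewrite /= !inE; apply/orP; right; apply/existsP; exists u; rewrite hu.
Qed.

Lemma ball_exists v : exists k, v \in ball k.
Proof.
have /connectP [p hp ->] := rt_connected v; exists (size p).
elim/last_ind: p hp => [|p b IH]; first by rewrite inE.
by rewrite rcons_path last_rcons size_rcons => /andP [/IH hp]; exact: ballS.
Qed.

Definition depth v : nat := ex_minn (ball_exists v).

Lemma depth_ball v : v \in ball (depth v).
Proof. by rewrite /depth; case: ex_minnP. Qed.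

Lemma depth_min v k : v \in ball k -> depth v <= k.
Proof. by rewrite /depth; case: ex_minnP => m _ h /h. Qed.

Lemma depth0 v : depth v = 0 -> v = rt.
Proof. by move=> h; have := depth_ball v; rewrite h inE => /eqP. Qed.

Definition parent v : V := odflt v [pick u | e u v && ((depth u).+1 == depth v)].

Lemma parent_spec v : v != rt -> e (parent v) v /\ (depth (parent v)).+1 = depth v.
Proof.
move=> hv; suff [u hu] : exists u, e u v && ((depth u).+1 == depth v).
  by rewrite /parent; case: pickP => [w /andP [? /eqP]|/(_ u)]; [|rewrite hu].
case E: (depth v) => [|k]; first by move: hv; rewrite (depth0 E) eqxx.
have := depth_ball v; rewrite E /= inE => /orP [/depth_min|]; first by rewrite E ltnn.
rewrite inE => /existsP [u /andP [hu huv]]; exists u; rewrite huv /=.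
have := depth_min hu; have := depth_min (ballS (depth_ball u) huv).
by rewrite E; lia.
Qed.

Definition is_child v u := (u != rt) && (parent u == v).

Lemma depth_child v u : is_child v u -> depth u = (depth v).+1.
Proof. by case/andP => hu /eqP <-; have [_ ->] := parent_spec hu. Qed.

(* [height.+1] rounds of fuel suffice, since children are one level deeper. *)
Fixpoint subtree_sum_fuel (wt : V -> nat) k v : nat :=
  if k is k'.+1 then wt v + \sum_(u | is_child v u) subtree_sum_fuel wt k' u else wt v.

Definition height := \max_v depth v.

Definition subtree_sum wt v := subtree_sum_fuel wt height.+1 v.

Lemma subtree_sum_fuel_stable wt k v :
  height < depth v + k -> subtree_sum_fuel wt k v = subtree_sum_fuel wt k.+1 v.
Proof.
elim: k v => [|k IH] v h; first by move: h; rewrite addn0 ltnNge leq_bigmax.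
rewrite [LHS]/= [RHS]/=; congr (_ + _); apply: eq_bigr => u hu.
by apply: IH; rewrite (depth_child hu); lia.
Qed.

Lemma subtree_sumE wt v : subtree_sum wt v = wt v + \sum_(u | is_child v u) subtree_sum wt u.
Proof.
rewrite /subtree_sum [LHS]/=; congr (_ + _); apply: eq_bigr => u hu.
by apply: subtree_sum_fuel_stable; rewrite (depth_child hu); lia.
Qed.

Lemma subtree_sum_root wt : subtree_sum wt rt = \sum_v wt v.
Proof.
rewrite -(sum_roots_recurrence (is_root := pred1 rt) (par := parent) (S := subtree_sum wt)).
  by rewrite big_pred1_eq.
exact: subtree_sumE.
Qed.

Lemma subtree_sum_le wt v : subtree_sum wt v <= \sum_u wt u.
Proof.
rewrite -subtree_sum_root; elim: {v}(depth v) {-2}v (erefl (depth v)) => [|d IH] v hd.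
  by rewrite (depth0 hd).
have hv : v != rt.
  by apply: contra_eqN hd => /eqP ->; have := @depth_min rt 0 (set11 rt); rewrite leqn0 => /eqP ->.
apply: leq_trans (IH (parent v) _); last by have [_] := parent_spec hv; rewrite hd => -[].
rewrite [X in _ <= X]subtree_sumE (bigD1 v) /=; first by rewrite addnCA leq_addr.
by rewrite /is_child hv eqxx.
Qed.

End BfsTree.

(* Node [v] contributes the key (pi v, x v) unless it is first, and the key
   (pi v + 1, y v) unless it is last, where [y v] is the claimed value of [x]
   at its successor. *)
Definition entry_key (b a : nat) : option (nat * nat) := if b != 0 then Some (b, a) else None.
Definition link_key (n b y : nat) : option (nat * nat) :=
  if b.+1 != n then Some (b.+1, y) else None.

Lemma card_partition_bounded (V : finType) (P : pred V) (f : V -> nat) N :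
  (forall v, f v < N) -> #|P| = \sum_(z < N) #|[pred v | P v && (f v == z)]|.
Proof.
move=> hf; rewrite -sum1_card (partition_big (fun v => Ordinal (hf v)) predT) //=.
by apply: eq_bigr => z _; rewrite -sum1_card; apply: eq_bigl => v; rewrite /= -val_eqE.
Qed.

Section Chain.
Variables (N : nat) (V : finType) (pi x y : V -> nat).
Let n := #|V|.
Hypotheses (n_gt0 : 0 < n) (pi_lt : forall v, pi v < n)
  (x_lt : forall v, x v < N) (y_lt : forall v, y v < N)
  (x_lt_y : forall v, (pi v).+1 != n -> x v < y v)
  (keys_eq : forall p, key_count (fun v => entry_key (pi v) (x v)) p =
                       key_count (fun v => link_key n (pi v) (y v)) p).

Let level i := #|[pred v | pi v == i]|.

Lemma level_succ i : i.+1 < n -> level i.+1 = level i.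
Proof.
move=> hi; rewrite /level (card_partition_bounded _ x_lt) (card_partition_bounded _ y_lt).
apply: eq_bigr => z _; transitivity (key_count (fun v => link_key n (pi v) (y v)) (i.+1, val z)).
  rewrite -keys_eq; apply: eq_card => v; rewrite !inE /entry_key.
  by case: (pi v) => [|b] //=; rewrite xpair_eqE.
apply: eq_card => v; rewrite !inE /link_key.
case: (eqVneq (pi v) i) => [->|hne] /=.
  have -> : i.+1 != n by lia.
  by apply/eqP/eqP => [[]|->].
by case: ifP => // _; apply/eqP => -[hp _]; move/eqP: hne; lia.
Qed.

Lemma level_one i : i < n -> level i = 1.
Proof.
have level0 j : j < n -> level j = level 0 by elim: j => // j IH hj; rewrite level_succ ?IH //; lia.
have : #|[pred v : V | true]| = \sum_(j < n) level j.
  by rewrite (card_partition_bounded _ pi_lt); apply: eq_bigr => j _; apply: eq_card.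
rewrite (eq_bigr (fun _ => level 0)) => [|j _]; last exact: level0.
have -> : #|[pred v : V | true]| = n by apply: eq_card.
rewrite sum_nat_const card_ord => hn hi; rewrite level0 //; move: hn n_gt0; nia.
Qed.

Lemma pi_inj : injective pi.
Proof.
move=> u v huv; have := level_one (pi_lt u); rewrite /level => /eqP.
by rewrite eqn_leq => /andP [/card_le1_eqP h _]; apply: h; rewrite inE ?huv.
Qed.

Lemma pi_onto i : i < n -> exists v, pi v = i.
Proof.
move/level_one => h; have /card_gt0P [v] : 0 < level i by rewrite h.
by rewrite inE => /eqP <-; exists v.
Qed.

Lemma successor v : (pi v).+1 != n -> exists2 u, pi u = (pi v).+1 & x u = y v.
Proof.
move=> hv; have : 0 < key_count (fun v => link_key n (pi v) (y v)) ((pi v).+1, y v).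
  by apply/card_gt0P; exists v; rewrite inE /link_key hv.
rewrite -keys_eq => /card_gt0P [u]; rewrite inE /entry_key.
by case: ifP => // _ /eqP [? ?]; exists u.
Qed.

Lemma x_increasing u v : pi u < pi v -> x u < x v.
Proof.
move=> huv; have := subnKC huv; move: (pi v - _) => d; elim: d u {huv} => [|d IH] u hv.
  have hu : (pi u).+1 != n by apply/eqP => hn; move: (pi_lt v); rewrite -hv addn0 hn ltnn.
  have [w hw hxw] := successor hu; have -> : v = w by apply: pi_inj; rewrite hw -hv addn0.
  by rewrite hxw; exact: x_lt_y.
have hu : (pi u).+1 != n by apply/eqP => hn; move: (pi_lt v); rewrite -hv; lia.
have [w hw hxw] := successor hu.
apply: ltn_trans (IH w _); first by rewrite hxw; exact: x_lt_y.
by rewrite hw -hv addSnnS.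
Qed.

Lemma chain_corresponding_order : corresponding_order N x pi.
Proof.
have x_inj : injective x.
  move=> u v huv; apply: pi_inj.
  by case: (ltngtP (pi u) (pi v)) => // /x_increasing; rewrite huv ltnn.
have card_le : #|V| <= N.
  have inj : injective (fun v => Ordinal (x_lt v)) by move=> u v [/x_inj].
  by have := leq_card _ inj; rewrite card_ord.
split; [by split; [exact: pi_lt | exact: pi_inj | exact: pi_onto] | by [] |].
move=> u v; case: (ltngtP (pi v) (pi u)) => [/x_increasing/ltnW -> | huv | /pi_inj ->] //.
by split => // hle; have := x_increasing huv; rewrite ltnNge hle.
Qed.

End Chain.

Definition width (k N : nat) : nat := (k + 3) * (trunc_log 2 N).+1.

(* A message has nine fields: 0 the sender's id, 1 root flag, 2 id of the
   root, 3 id of the parent, 4 the claimed n, 5 subtree size, 6 the claimed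
   x of the successor, all from the first certificate; 7, 8 subtree sums of
   the hashes of the entry and link keys, from the second certificate.
   Taking fields 0-6 from the first certificate makes the certified tree
   independent of the random string. *)
Definition wire (w : nat) (c0 c1 : bits) : bits :=
  encode w ([seq field w c0 j | j <- iota 0 7] ++ [seq field w c1 j | j <- iota 0 2]).

Lemma size_wire w c0 c1 : size (wire w c0 c1) = 9 * w.
Proof. by rewrite size_encode. Qed.

Lemma field_wire w c0 c1 j : j < 9 ->
  field w (wire w c0 c1) j = if j < 7 then field w c0 j else field w c1 (j - 7).
Proof.
move=> hj; rewrite field_encode ?size_cat ?size_map ?size_iota //; last first.
  by rewrite all_cat !all_map; apply/andP; split; apply/allP => i _; exact: field_lt.
rewrite nth_cat size_map size_iota.
by case: ifP => h; rewrite (nth_map 0) ?nth_iota ?size_iota //; lia.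
Qed.

Definition code (N : nat) (p : nat * nat) : nat := p.1 * N + p.2.

Section Verifier.
Variables (w N : nat).
Local Notation fld j m := (field w m j).

Definition is_root (m : bits) : bool := fld 1 m == 1.
Definition kids (m : bits) (ms : seq bits) : seq bits :=
  [seq m' <- ms | ~~ is_root m' & fld 3 m' == fld 0 m].
Definition kids_sum (j : nat) (m : bits) (ms : seq bits) : nat :=
  sumn [seq fld j m' | m' <- kids m ms].

Definition tree_check (i : nat) (m : bits) (ms : seq bits) : bool :=
  [&& fld 0 m == i,
      all (fun m' => (fld 2 m' == fld 2 m) && (fld 4 m' == fld 4 m)) ms,
      if is_root m then (fld 0 m == fld 2 m) && (fld 5 m == fld 4 m)
      else has (fun m' => fld 0 m' == fld 3 m) ms
    & fld 5 m == 1 + kids_sum 5 m ms].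

Definition order_check (a b : nat) (m : bits) : bool :=
  [&& b < fld 4 m, fld 4 m <= N, a < N, fld 6 m < N & (b.+1 != fld 4 m) ==> (a < fld 6 m)].

Definition hash_check (r : bits) (a b : nat) (m : bits) (ms : seq bits) : bool :=
  [&& fld 7 m == hash_key r (omap (code N) (entry_key b a)) + kids_sum 7 m ms,
      fld 8 m == hash_key r (omap (code N) (link_key (fld 4 m) b (fld 6 m))) + kids_sum 8 m ms
    & is_root m ==> (fld 7 m == fld 8 m)].

End Verifier.

(* Keys are pairs in [0, N)^2, coded below [N^2]: two random bits per key. *)
Definition protocol (k : nat) : dMAM_protocol :=
  DMAM (fun N => 2 * (N * N)) (fun N _ _ _ _ c0 c1 => wire (width k N) c0 c1)
    (fun N i a b r c0 c1 ms => let m := wire (width k N) c0 c1 in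
       [&& tree_check (width k N) i m ms, order_check (width k N) N a b m
         & hash_check (width k N) N r a b m ms]).

Lemma protocol_messages_bounded k : messages_bounded (protocol k) (9 * (k + 3)).
Proof. by move=> N i a b r c0 c1 _ _ _; rewrite /= size_wire /size_bound /width mulnA. Qed.

(* [G j v] stands for field [j] of the first certificate of [v], with the
   layout of [wire]; the parent pointers it describes may contain cycles. *)
Section CertifiedTree.
Variables (V : finType) (e : rel V) (id : V -> nat) (G : nat -> V -> nat).

Definition tree_kid v u := [&& e v u, G 1 u != 1 & G 3 u == G 0 v].

Hypotheses (e_sym : symmetric e) (e_connected : forall u v, connect e u v)
  (id_inj : injective id) (V_gt0 : 0 < #|V|).
Hypotheses (G_id : forall v, G 0 v = id v)
  (G_agree : forall v u, e v u -> G 2 u = G 2 v /\ G 4 u = G 4 v)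
  (G_root : forall v, G 1 v == 1 -> G 0 v = G 2 v /\ G 5 v = G 4 v)
  (G_parent : forall v, G 1 v != 1 -> exists2 u, e v u & G 0 u = G 3 v)
  (G_count : forall v, G 5 v = 1 + \sum_(u | tree_kid v u) G 5 u).

Lemma connected_const (f : V -> nat) : (forall u v, e u v -> f v = f u) -> forall u v, f u = f v.
Proof.
move=> hf u v; have /connectP [p hp ->] := e_connected u v.
by elim: p u hp => [|b p IH] u //= /andP [hub /IH <-]; rewrite (hf u b hub).
Qed.

Lemma cert_sum_roots (S wt : V -> nat) :
  (forall v, S v = wt v + \sum_(u | tree_kid v u) S u) ->
  \sum_(u | G 1 u == 1) S u = \sum_v wt v.
Proof.
pose par u := odflt u [pick w | e u w && (G 0 w == G 3 u)].
have kidE v u : tree_kid v u = (G 1 u != 1) && (par u == v).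
  rewrite /tree_kid; case: (boolP (G 1 u != 1)) => [hu|]; last by rewrite andbF.
  have [w hw] : exists w, e u w && (G 0 w == G 3 u).
    by have [w ? ?] := G_parent hu; exists w; apply/andP; split => //; apply/eqP.
  rewrite /par; case: pickP => [p /andP [hup /eqP hp]|/(_ w)]; last by rewrite hw.
  rewrite /=; apply/andP/eqP => [[_ /eqP hv]|<-]; last by rewrite e_sym hup hp.
  by apply: id_inj; rewrite -!G_id hp hv.
move=> hS; apply: (sum_roots_recurrence (par := par)) => v.
by rewrite hS; congr (_ + _); apply: eq_bigl => u; rewrite kidE.
Qed.

(* All nodes agree on the root's identifier, so there is exactly one root. *)
Lemma cert_root : exists2 rt, G 1 rt == 1 &
  forall S wt : V -> nat, (forall v, S v = wt v + \sum_(u | tree_kid v u) S u) ->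
    S rt = \sum_v wt v.
Proof.
have hsize := cert_sum_roots G_count; rewrite sum1_card in hsize.
have [rt hrt] : exists rt, G 1 rt == 1.
  case: (pickP (fun u => G 1 u == 1)) => [u hu|h0]; first by exists u.
  by move: V_gt0; rewrite -hsize big_pred0.
exists rt => // S wt /cert_sum_roots <-; apply/esym/big_pred1 => u /=.
apply/idP/eqP => [hu|->] //; apply: id_inj; rewrite -!G_id.
have [-> _] := G_root hu; have [-> _] := G_root hrt.
by apply: connected_const => a b /G_agree [].
Qed.

Lemma cert_size v : G 4 v = #|V|.
Proof.
have [rt hrt hsum] := cert_root; have := hsum _ _ G_count; rewrite sum1_card => <-.
have [_ ->] := G_root hrt; by apply: connected_const => a b /G_agree [].
Qed.

End CertifiedTree.

Section Network.
Variables (V : finType) (e : rel V) (msg : V -> bits) (v : V).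
Let nbrs := [seq msg u | u <- enum V & e v u].

Lemma all_nbrs (q : pred bits) : all q nbrs = [forall u, e v u ==> q (msg u)].
Proof.
apply/allP/forallP => [h u|h m /mapP [u]].
  by apply/implyP => hu; apply: h; apply: map_f; rewrite mem_filter hu mem_enum.
by rewrite mem_filter => /andP [hu _] ->; exact: (implyP (h u)).
Qed.

Lemma has_nbrs (q : pred bits) : has q nbrs = [exists u, e v u && q (msg u)].
Proof.
apply/hasP/existsP => [[m /mapP [u]]|[u /andP [hu hq]]].
  by rewrite mem_filter => /andP [hu _] -> hq; exists u; rewrite hu.
by exists (msg u) => //; apply: map_f; rewrite mem_filter hu mem_enum.
Qed.

Lemma sumn_nbrs (q : pred bits) (f : bits -> nat) :
  sumn [seq f m | m <- [seq m <- nbrs | q m]] = \sum_(u | e v u && q (msg u)) f (msg u).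
Proof.
rewrite filter_map -map_comp sumnE big_map -filter_predI big_filter enumT.
by apply: eq_bigl => u; rewrite /= andbC.
Qed.

Variables (w N : nat) (G : nat -> V -> nat).
Hypothesis field_msg : forall j u, j < 7 -> field w (msg u) j = G j u.

Lemma tree_kid_fields : tree_kid e (fun j u => field w (msg u) j) v =1 tree_kid e G v.
Proof. by move=> u; rewrite /tree_kid !field_msg. Qed.

Lemma tree_check_nbrs i : tree_check w i (msg v) nbrs =
  [&& G 0 v == i, [forall u, e v u ==> (G 2 u == G 2 v) && (G 4 u == G 4 v)],
      if G 1 v == 1 then (G 0 v == G 2 v) && (G 5 v == G 4 v)
      else [exists u, e v u && (G 0 u == G 3 v)]
    & G 5 v == 1 + \sum_(u | tree_kid e G v u) G 5 u].
Proof.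
rewrite /tree_check /is_root /kids_sum /kids all_nbrs has_nbrs sumn_nbrs.
rewrite (eq_bigl _ _ tree_kid_fields).
rewrite !field_msg //; under eq_forallb do rewrite !field_msg //.
by under eq_existsb do rewrite !field_msg //; under eq_bigr do rewrite field_msg //.
Qed.

Lemma hash_check_nbrs r a b : hash_check w N r a b (msg v) nbrs =
  let F j u := field w (msg u) j in
  [&& F 7 v == hash_key r (omap (code N) (entry_key b a)) + \sum_(u | tree_kid e G v u) F 7 u,
      F 8 v == hash_key r (omap (code N) (link_key (G 4 v) b (G 6 v)))
               + \sum_(u | tree_kid e G v u) F 8 u
    & (G 1 v == 1) ==> (F 7 v == F 8 v)].
Proof.
rewrite /hash_check /is_root /kids_sum /kids !sumn_nbrs !(eq_bigl _ _ tree_kid_fields).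
by rewrite (@field_msg 1) ?(@field_msg 4) ?(@field_msg 6).
Qed.

End Network.

Lemma key_count_code (V : finType) N (f : V -> option (nat * nat)) p :
  (forall v q, f v = Some q -> q.2 < N) -> p.2 < N ->
  key_count (fun v => omap (code N) (f v)) (code N p) = key_count f p.
Proof.
move=> hf hp; apply: eq_card => v; rewrite !inE.
case E: (f v) => [q|] //=; have hq := hf v q E.
case: q p hq hp {E} => [a b] [c d] /= hb hd; apply/eqP/eqP => [[h]|[-> ->]] //.
move: h; rewrite /code /= => h.
have := congr1 (divn^~ N) h; have := congr1 (modn^~ N) h; rewrite /= !modnMDl !divnMDl; try lia.
by rewrite !modn_small ?divn_small ?addn0 // => -> ->.
Qed.

Lemma key_count_out (V : finType) (T : eqType) (P : pred T) (f : V -> option T) t :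
  (forall v q, f v = Some q -> P q) -> ~~ P t -> key_count f t = 0.
Proof.
move=> hf ht; apply: eq_card0 => v; rewrite inE; apply/eqP => /hf.
by apply/negP.
Qed.

Section Soundness.
Variables (k N : nat) (V : finType) (e : rel V) (id x pi : V -> nat).
Hypotheses (e_sym : symmetric e) (e_connected : forall u v, connect e u v)
  (id_inj : injective id) (V_gt0 : 0 < #|V|).
Let w := width k N.
Let L := 2 * (N * N).
Variables (c0 : V -> bits) (c1 : L.-tuple bool -> V -> bits).

Let msg (r : L.-tuple bool) u := wire w (c0 u) (c1 r u).
Let G j u := field w (c0 u) j.
Let accepted (r : L.-tuple bool) := all_accept (protocol k) N e id x pi c0 r (c1 r).
Let fa v := omap (code N) (entry_key (pi v) (x v)).
Let fb v := omap (code N) (link_key #|V| (pi v) (G 6 v)).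

Lemma sent_field r j u : j < 7 -> field w (msg r u) j = G j u.
Proof. by move=> hj; rewrite field_wire ?hj //; lia. Qed.

Lemma accepted_checks r v : accepted r ->
  [&& tree_check w (id v) (msg r v) [seq msg r u | u <- enum V & e v u],
      order_check w N (x v) (pi v) (msg r v)
    & hash_check w N r (x v) (pi v) (msg r v) [seq msg r u | u <- enum V & e v u]].
Proof. by move/forallP/(_ v). Qed.

Section Accepted.
Variable r0 : L.-tuple bool.
Hypothesis accepted_r0 : accepted r0.

Lemma accepted_tree v :
  [&& G 0 v == id v, [forall u, e v u ==> (G 2 u == G 2 v) && (G 4 u == G 4 v)],
      if G 1 v == 1 then (G 0 v == G 2 v) && (G 5 v == G 4 v)
      else [exists u, e v u && (G 0 u == G 3 v)]
    & G 5 v == 1 + \sum_(u | tree_kid e G v u) G 5 u].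
Proof.
have /and3P [+ _ _] := accepted_checks v accepted_r0.
by rewrite (tree_check_nbrs _ _ (@sent_field r0)).
Qed.

Lemma accepted_id v : G 0 v = id v.
Proof. by case/and4P: (accepted_tree v) => /eqP. Qed.

Lemma accepted_agree v u : e v u -> G 2 u = G 2 v /\ G 4 u = G 4 v.
Proof.
by case/and4P: (accepted_tree v) => _ /forallP /(_ u) /implyP h _ _ /h /andP [/eqP ? /eqP].
Qed.

Lemma accepted_root_fields v : G 1 v == 1 -> G 0 v = G 2 v /\ G 5 v = G 4 v.
Proof. by case/and4P: (accepted_tree v) => _ _ + _ hv; rewrite hv => /andP [/eqP ? /eqP]. Qed.

Lemma accepted_parent v : G 1 v != 1 -> exists2 u, e v u & G 0 u = G 3 v.
Proof.
case/and4P: (accepted_tree v) => _ _ + _ hv; rewrite (negbTE hv).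
by case/existsP => u /andP [? /eqP]; exists u.
Qed.

Lemma accepted_count v : G 5 v = 1 + \sum_(u | tree_kid e G v u) G 5 u.
Proof. by case/and4P: (accepted_tree v) => _ _ _ /eqP. Qed.

Lemma accepted_size v : G 4 v = #|V|.
Proof. exact: (cert_size e_sym e_connected id_inj V_gt0 accepted_id accepted_agree
  accepted_root_fields accepted_parent accepted_count). Qed.

Lemma accepted_order v :
  [&& pi v < #|V|, #|V| <= N, x v < N, G 6 v < N & ((pi v).+1 != #|V|) ==> (x v < G 6 v)].
Proof.
have /and3P [_ + _] := accepted_checks v accepted_r0.
by rewrite /order_check !sent_field // accepted_size.
Qed.

Lemma accepted_fingerprint r : accepted r -> fingerprint r fa = fingerprint r fb.
Proof.
move=> acc; have [rt hrt hsum] := cert_root e_sym e_connected id_inj V_gt0 accepted_id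
  accepted_agree accepted_root_fields accepted_parent accepted_count.
pose F j u := field w (msg r u) j.
have hash_ok v : [&& F 7 v == hash_key r (fa v) + \sum_(u | tree_kid e G v u) F 7 u,
                    F 8 v == hash_key r (fb v) + \sum_(u | tree_kid e G v u) F 8 u
                  & (G 1 v == 1) ==> (F 7 v == F 8 v)].
  have /and3P [_ _] := accepted_checks v acc.
  by rewrite (hash_check_nbrs _ _ _ (@sent_field r)) accepted_size.
have h7 v : F 7 v = hash_key r (fa v) + \sum_(u | tree_kid e G v u) F 7 u.
  by case/and3P: (hash_ok v) => /eqP.
have h8 v : F 8 v = hash_key r (fb v) + \sum_(u | tree_kid e G v u) F 8 u.
  by case/and3P: (hash_ok v) => _ /eqP.
rewrite /fingerprint -(hsum _ _ h7) -(hsum _ _ h8).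
by case/and3P: (hash_ok rt) => _ _; rewrite hrt => /eqP.
Qed.

Let pa v := entry_key (pi v) (x v).
Let pb v := link_key #|V| (pi v) (G 6 v).
Let bounded (q : nat * nat) := (q.1 < N) && (q.2 < N).

Lemma accepted_keys_bounded v q : (pa v = Some q \/ pb v = Some q) -> bounded q.
Proof.
have /and5P [hpi hn hx hy _] := accepted_order v.
by case; rewrite /pa /pb /entry_key /link_key; case: ifP => // h [<-];
  apply/andP; split => /=; lia.
Qed.

Lemma differing_key : ~ corresponding_order N x pi ->
  exists2 u0, u0 < N * N & key_count fa u0 != key_count fb u0.
Proof.
move=> hnot; pose same (p : 'I_N * 'I_N) :=
  key_count pa (val p.1, val p.2) == key_count pb (val p.1, val p.2).
have [/forallP hall|] := boolP [forall p, same p]; last first.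
  rewrite negb_forall => /existsP [[i j] hij]; exists (code N (val i, val j)).
    by have := ltn_ord i; have := ltn_ord j; rewrite /code /=; nia.
  have snd_lt v q : pa v = Some q \/ pb v = Some q -> q.2 < N.
    by move/accepted_keys_bounded => /andP [].
  rewrite !key_count_code //= => v q hq; apply: (snd_lt v); by [left | right].
case: hnot; apply: (@chain_corresponding_order N V pi x (G 6)) => [|v|v|v|v|p] //.
- by case/and5P: (accepted_order v).
- by case/and5P: (accepted_order v).
- by case/and5P: (accepted_order v).
- by case/and5P: (accepted_order v) => _ _ _ _ /implyP.
have [hp|hp] := boolP (bounded p).
  by case/andP: hp => h1 h2; apply/eqP: (hall (Ordinal h1, Ordinal h2)); case: p {h1 h2}.
rewrite (key_count_out (f := pa) _ hp) ?(key_count_out (f := pb) _ hp) // => v q hq;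
  apply: (accepted_keys_bounded (v := v)); by [left | right].
Qed.

End Accepted.

Lemma soundness : ~ corresponding_order N x pi ->
  4 * n_accept (protocol k) N e id x pi c0 c1 <= 2 ^ L.
Proof.
move=> hnot; case: (pickP accepted) => [r0 acc0|none]; last first.
  by rewrite /n_accept (eq_card0 (fun r => _)) // => r; rewrite inE; exact: none.
have [u0 hu0 hneq] := differing_key acc0 hnot.
apply: leq_trans (@card_collisions L u0 V fa fb _ hneq); last by rewrite /L; lia.
rewrite leq_mul2l; apply/orP; right; apply: subset_leq_card; apply/subsetP => r.
by rewrite !inE => /(accepted_fingerprint acc0) ->.
Qed.

End Soundness.

Lemma width_bound k N m : 0 < N -> m <= 3 * N ^ k.+1 -> m < 2 ^ width k N.
Proof.
move=> hN hm; set t := trunc_log 2 N.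
have : N ^ k.+1 < 2 ^ (t.+1 * k.+1) by rewrite expnM ltn_exp2r // trunc_log_ltn.
rewrite /width -/t => h; apply: leq_ltn_trans hm _.
apply: (@leq_trans (2 ^ (2 + t.+1 * k.+1))); first by rewrite expnD; lia.
by rewrite leq_exp2l //; nia.
Qed.

Section Completeness.
Variables (k N : nat) (V : finType) (e : rel V) (id x pi : V -> nat) (rt : V).
Hypotheses (e_sym : symmetric e) (e_connected : forall u v, connect e u v)
  (id_inj : injective id) (id_bound : forall v, 1 <= id v <= #|V| ^ k)
  (yes : corresponding_order N x pi).
Let n := #|V|.
Let w := width k N.
Let L := 2 * (N * N).
Let rt_connected := e_connected rt.

Let pi_lt : forall v, pi v < n. Proof. by case: yes => [[]]. Qed.
Let n_le_N : n <= N. Proof. by case: yes => _ []. Qed.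
Let x_lt : forall v, x v < N. Proof. by case: yes => _ []. Qed.

Definition pi_inv i := odflt rt [pick v | pi v == i].

Lemma pi_invK i : i < n -> pi (pi_inv i) = i.
Proof.
case: yes => [[_ _ onto] _ _] /onto [u hu].
by rewrite /pi_inv; case: pickP => [v /eqP //|/(_ u)]; rewrite hu eqxx.
Qed.

Definition next v := pi_inv ((pi v).+1 %% n).

Lemma pi_next v : pi (next v) = (pi v).+1 %% n.
Proof. by rewrite pi_invK // ltn_pmod //; exact: leq_ltn_trans (pi_lt v). Qed.

Lemma next_inj : injective next.
Proof.
case: yes => [[_ pi_inj _] _ _] u v /(congr1 pi).
rewrite !pi_next -[(pi u).+1]addn1 -[(pi v).+1]addn1.
by move/eqP; rewrite eqn_modDr !modn_small // => /eqP /pi_inj.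
Qed.

Let y v := x (next v).
Let fa v := omap (code N) (entry_key (pi v) (x v)).
Let fb v := omap (code N) (link_key n (pi v) (y v)).

Lemma link_next v : link_key n (pi v) (y v) = entry_key (pi (next v)) (x (next v)).
Proof.
rewrite /link_key /entry_key pi_next; have := pi_lt v.
case: (ltngtP (pi v).+1 n) => [h _|//|->]; last by rewrite modnn !eqxx.
by rewrite modn_small // (ltn_eqF h).
Qed.

Lemma fingerprint_entry_link r : fingerprint r fa = fingerprint r fb.
Proof.
by rewrite /fingerprint (reindex_inj next_inj); apply: eq_bigr => v _; rewrite /fb link_next.
Qed.

Lemma x_lt_next v : (pi v).+1 != n -> x v < y v.
Proof.
move=> hv; have hnext : pi (next v) = (pi v).+1.
  by rewrite pi_next modn_small // ltn_neqAle hv pi_lt.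
case: yes => _ _ /(_ v (next v)) [_ h]; rewrite /y ltnNge.
by apply/negP => /h; rewrite hnext ltnn.
Qed.

Let parent := parent rt_connected.
Let subtree := subtree_sum rt_connected.

Definition cert0_fields v :=
  [:: id v; nat_of_bool (v == rt); id rt; id (parent v); n; subtree (fun _ => 1) v; y v].
Definition cert1_fields (r : bits) v :=
  [:: subtree (fun u => hash_key r (fa u)) v; subtree (fun u => hash_key r (fb u)) v].

Definition cert0 v := encode w (cert0_fields v).
Definition cert1 (r : L.-tuple bool) v := encode w (cert1_fields r v).

Let N_gt0 : 0 < N. Proof. by apply: leq_trans _ n_le_N; apply/card_gt0P; exists rt. Qed.

Let small m : m <= 3 * N -> m < 2 ^ w.
Proof.
move=> hm; apply: width_bound => //; apply: leq_trans hm _.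
by rewrite leq_mul2l -{1}(expn1 N) leq_pexp2l.
Qed.

Let id_lt u : id u < 2 ^ w.
Proof.
apply: width_bound => //; have /andP [_ hid] := id_bound u.
apply: leq_trans hid _; apply: (@leq_trans (N ^ k.+1)); last by rewrite leq_pmull.
rewrite expnS; apply: leq_trans (leq_pmull _ N_gt0).
by case: (k) => // k'; rewrite leq_exp2r.
Qed.

Let subtree_le wt u : (forall u, wt u <= 3) -> subtree wt u <= 3 * N.
Proof.
move=> hwt; apply: leq_trans (subtree_sum_le _ _ _) _.
have : \sum_u wt u <= \sum_(u : V) 3 by apply: leq_sum => v _.
by rewrite sum_nat_const mulnC => /leq_trans; apply; rewrite leq_mul2l n_le_N orbT.
Qed.

Lemma cert0_fields_lt v : all (fun a => a < 2 ^ w) (cert0_fields v).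
Proof.
rewrite /= !id_lt !small ?andbT //; first by apply: ltnW; apply: leq_trans (x_lt _) _; lia.
- by apply: subtree_le.
- by lia.
- by case: (v == rt); lia.
Qed.

Lemma cert1_fields_lt r v : all (fun a => a < 2 ^ w) (cert1_fields r v).
Proof. by rewrite /= !small // subtree_le // => u; exact: hash_key_le3. Qed.

Let msg (r : L.-tuple bool) u := wire w (cert0 u) (cert1 r u).
Let G j u := nth 0 (cert0_fields u) j.

Lemma honest_field r j u : j < 7 -> field w (msg r u) j = G j u.
Proof. by move=> hj; rewrite field_wire ?hj ?field_encode ?cert0_fields_lt //; lia. Qed.

Lemma honest_field_c1 r j u : 7 <= j < 9 -> field w (msg r u) j = nth 0 (cert1_fields r u) (j - 7).
Proof.
case/andP => hj1 hj2; rewrite field_wire // ltnNge hj1 /= field_encode ?cert1_fields_lt //.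
by rewrite /=; lia.
Qed.

Lemma tree_kid_child v u : tree_kid e G v u = is_child rt_connected v u.
Proof.
rewrite /tree_kid /is_child /G /=; case: (eqVneq u rt) => [->|hu] /=; first by rewrite andbF.
rewrite (inj_eq id_inj); apply/andP/idP => [[//]|/eqP hp].
by rewrite -hp (parent_spec _ hu).1.
Qed.

Lemma node_accepts (r : L.-tuple bool) v :
  decide (protocol k) N (id v) (x v) (pi v) (val r) (cert0 v) (cert1 r v)
    [seq msg r u | u <- enum V & e v u].
Proof.
rewrite /= (tree_check_nbrs _ _ (@honest_field r)) (hash_check_nbrs _ _ _ (@honest_field r)).
rewrite /order_check (@honest_field r 4) ?(@honest_field r 6) //.
have F7 u : field w (msg r u) 7 = subtree (fun u => hash_key r (fa u)) u.
  by rewrite (@honest_field_c1 r 7).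
have F8 u : field w (msg r u) 8 = subtree (fun u => hash_key r (fb u)) u.
  by rewrite (@honest_field_c1 r 8).
rewrite !(eq_bigl _ _ (tree_kid_child v)) !(eq_bigr _ (fun u _ => F7 u)).
rewrite !(eq_bigr _ (fun u _ => F8 u)) F7 F8 /G /subtree /=.
apply/and3P; split.
- apply/and4P; split => //; last by rewrite [X in X == _]subtree_sumE.
    by apply/forallP => u; rewrite !eqxx implybT.
  case: (eqVneq v rt) => [->|hv] /=; first by rewrite /subtree subtree_sum_root sum1_card !eqxx.
  apply/existsP; exists (parent v); rewrite eqxx andbT e_sym; exact: (parent_spec _ hv).1.
- by apply/and5P; split; rewrite ?pi_lt ?n_le_N ?x_lt //; apply/implyP; exact: x_lt_next.
apply/and3P; split; [by rewrite [X in X == _]subtree_sumE | by rewrite [X in X == _]subtree_sumE |].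
apply/implyP; case: (eqVneq v rt) => [->|] //= _.
by rewrite !subtree_sum_root; have := fingerprint_entry_link r; rewrite /fingerprint => ->.
Qed.

Lemma completeness : exists (c0 : V -> bits) (c1 : L.-tuple bool -> V -> bits),
  prover_bounded (protocol k) (9 * (k + 3)) N c0 c1 /\
  n_accept (protocol k) N e id x pi c0 c1 = 2 ^ L.
Proof.
exists cert0, cert1; split.
  by split => *; rewrite size_encode /size_bound -mulnA leq_mul2r orbC.
rewrite /n_accept -card_bool -card_tuple -cardsT; apply: eq_card => r.
by rewrite !inE; apply/forallP => v; exact: node_accepts.
Qed.

End Completeness.

Lemma n_accept_add_reject (P : dMAM_protocol) N (V : finType) (e : rel V) (id x pi : V -> nat)
    (c0 : V -> bits) (c1 : (rand_len P N).-tuple bool -> V -> bits) :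
  n_accept P N e id x pi c0 c1 + n_reject P N e id x pi c0 c1 = 2 ^ rand_len P N.
Proof.
rewrite /n_accept /n_reject -card_bool -card_tuple.
rewrite -(cardsC [set r | all_accept P N e id x pi c0 (val r) (c1 r)]).
by congr (_ + _); apply: eq_card => r; rewrite !inE.
Qed.

Theorem proposition4 :
  forall k : nat, exists c : nat, exists P : dMAM_protocol,
    messages_bounded P c /\
    forall (N : nat) (V : finType) (e : rel V) (id x pi : V -> nat),
      network e id k ->
      (corresponding_order N x pi ->
         exists (c0 : V -> bits) (c1 : (rand_len P N).-tuple bool -> V -> bits),
           prover_bounded P c N c0 c1 /\
           2 * 2 ^ rand_len P N <= 3 * n_accept P N e id x pi c0 c1) /\
      (~ corresponding_order N x pi ->
         forall (c0 : V -> bits) (c1 : (rand_len P N).-tuple bool -> V -> bits),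
           prover_bounded P c N c0 c1 ->
           2 * 2 ^ rand_len P N <= 3 * n_reject P N e id x pi c0 c1).
Proof.
move=> k; exists (9 * (k + 3)), (protocol k); split; first exact: protocol_messages_bounded.
move=> N V e id x pi [[e_sym _ V_gt0 e_connected] [id_inj id_bound]]; split.
- move=> yes; have /card_gt0P [rt _] := V_gt0.
  have [c0 [c1 [bounded accept_all]]] := completeness rt e_sym e_connected id_inj id_bound yes.
  by exists c0, c1; split => //; rewrite accept_all /=; lia.
- move=> no c0 c1 _; have := soundness k e_sym e_connected id_inj V_gt0 c0 c1 no.
  have := n_accept_add_reject e id x pi c0 c1; rewrite /=; lia.
Qed.
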